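(* Let $S\in\mathbb N$, $I\in\mathbb N$, $\eta>0$, $\kappa_r>0$, $\lambda>0$, and let $\rho_b,\rho_d,\kappa_i:\mathbb N\to[0,\infty)$ be bounded with $\rho_b(0)=\rho_d(0)=\kappa_i(0)=0$. Let $\mathbf X=\{0,\dots,S\}\times\mathbb N\times\{0,\dots,S+I\}$. Suppose $v:\mathbb N\to\mathbb R$ is bounded and satisfies, for every $c\in\mathbb N$, $v(c)=\min\Big\{\frac{\rho_b(c)v(c+1)+\rho_d(c)v(c-1)+\frac{\kappa_i(c)}{\eta+\kappa_r}}{\eta+\rho_b(c)+\rho_d(c)+\kappa_i(c)};\ \lambda\Big\}\qquad(\ast)$ (the term $\rho_d(0)v(-1)$ being $0$). Then $V(s,c,i)=s\,v(c)+\frac{i}{\eta+\kappa_r}$ is a bounded solution on $\mathbf X$ of the system $(\ast\ast)$: for $s\ge1$, $\min\Big\{-\eta V(s,c,i)+\rho_b(c)V(s,c+1,i)+\rho_d(c)V(s,c-1,i)+s\kappa_i(c)V(s-1,c,i+1)+i\kappa_rV(s,c,i-1)-V(s,c,i)[\rho_b(c)+\rho_d(c)+s\kappa_i(c)+i\kappa_r]+i;\ -V(s,c,i)+V(s-1,c,i)+\lambda\Big\}=0,$ and for $s=0$, $-\eta V(0,c,i)+\rho_b(c)V(0,c+1,i)+\rho_d(c)V(0,c-1,i)+i\kappa_rV(0,c,i-1)-V(0,c,i)[\rho_b(c)+\rho_d(c)+i\kappa_r]+i=0$ (terms with a zero coefficient are taken to be $0$). Moreover, for $(s,c,i)\in\mathbf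 X$ with $s\ge1$, the first (respectively, second) expression inside the minimum in $(\ast)$ equals $v(c)$ if and only if the first (respectively, second) expression inside the minimum in $(\ast\ast)$ equals zero.
   Context: This is the Bellman equation of an epidemic model with carriers: state $(s,c,i)$ = numbers of susceptibles, carriers and infectives; carriers follow a birth-death process with rates $\rho_b(c),\rho_d(c)$; each susceptible becomes infective at rate $\kappa_i(c)$; each infective recovers at rate $\kappa_r$; cost rate $i$; impulsive action immunizes one susceptible $(s,c,i)\to(s-1,c,i)$ at cost $\lambda$; discount factor $\eta$. *)

From Stdlib Require Import Reals.
Open Scope R_scope.

Definition bounded_nonneg (f : nat -> R) : Prop :=
  exists M : R, forall c : nat, 0 <= f c <= M.

Definition bounded_fun (f : nat -> R) : Prop :=
  exists M : R, forall c : nat, Rabs (f c) <= M.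

(* First expression inside the min in (star).  For c = 0 the term
   rho_d(0) v(c-1) uses truncated subtraction (v 0), but rho_d 0 = 0,
   so the term is 0 as in the paper. *)
Definition star_first (eta kr : R) (rb rd ki v : nat -> R) (c : nat) : R :=
  (rb c * v (S c) + rd c * v (pred c) + ki c / (eta + kr))
  / (eta + rb c + rd c + ki c).

Definition Vfun (eta kr : R) (v : nat -> R) (s c i : nat) : R :=
  INR s * v c + INR i / (eta + kr).

(* First expression inside the min in (HJB) (for s >= 1).  Indices c-1, i-1, s-1
   are truncated; whenever they would be negative the coefficient vanishes. *)
Definition hjb_first (eta kr : R) (rb rd ki : nat -> R) (V : nat -> nat -> nat -> R)
  (s c i : nat) : R :=
  - eta * V s c i + rb c * V s (S c) i + rd c * V s (pred c) i
  + INR s * ki c * V (pred s) c (S i) + INR i * kr * V s c (pred i)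
  - V s c i * (rb c + rd c + INR s * ki c + INR i * kr) + INR i.

Definition hjb_second (lam : R) (V : nat -> nat -> nat -> R) (s c i : nat) : R :=
  - V s c i + V (pred s) c i + lam.

Definition hjb_zero (eta kr : R) (rb rd : nat -> R) (V : nat -> nat -> nat -> R)
  (c i : nat) : R :=
  - eta * V 0%nat c i + rb c * V 0%nat (S c) i + rd c * V 0%nat (pred c) i
  + INR i * kr * V 0%nat c (pred i)
  - V 0%nat c i * (rb c + rd c + INR i * kr) + INR i.

From Stdlib Require Import Reals Lra Lia.
Open Scope R_scope.

(* V is affine in s with slope v(c), and the i/(eta+kr) part solves the
   s-independent equation exactly.  Hence the first HJB expression is
   s times the Bellman residual of (star) at c, and the second is lam - v(c).
   Since (star) forces both residuals to be nonnegative with one of them zero,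
   the minimum in (HJB) vanishes for every s >= 1. *)

Section ProductSolution.

Variables (eta kr : R) (rb rd ki v : nat -> R).
Hypothesis Hek : eta + kr <> 0.

Definition star_numer (c : nat) : R :=
  rb c * v (S c) + rd c * v (pred c) + ki c / (eta + kr).

Definition star_denom (c : nat) : R := eta + rb c + rd c + ki c.

Definition star_residual (c : nat) : R := star_numer c - star_denom c * v c.

Lemma hjb_zero_Vfun (c i : nat) : hjb_zero eta kr rb rd (Vfun eta kr v) c i = 0.
Proof.
  unfold hjb_zero, Vfun.
  destruct i as [|i]; simpl pred; rewrite ?S_INR; simpl INR; field; lra.
Qed.

Lemma hjb_first_Vfun (s c i : nat) :
  hjb_first eta kr rb rd ki (Vfun eta kr v) s c i = INR s * star_residual c.
Proof.
  unfold hjb_first, Vfun, star_residual, star_numer, star_denom.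
  destruct s as [|s], i as [|i]; simpl pred; rewrite ?S_INR; simpl INR;
    field; lra.
Qed.

Lemma hjb_second_Vfun (lam : R) (s c i : nat) : (1 <= s)%nat ->
  hjb_second lam (Vfun eta kr v) s c i = lam - v c.
Proof.
  intros Hs; destruct s as [|s]; [lia|].
  unfold hjb_second, Vfun; simpl pred; rewrite S_INR; ring.
Qed.

Hypotheses (Heta : 0 < eta) (Hrb : forall c, 0 <= rb c) (Hrd : forall c, 0 <= rd c)
  (Hki : forall c, 0 <= ki c).

Lemma star_denom_gt0 (c : nat) : 0 < star_denom c.
Proof. unfold star_denom; specialize (Hrb c); specialize (Hrd c); specialize (Hki c); lra. Qed.

Lemma star_residual_eq (c : nat) :
  star_residual c = (star_first eta kr rb rd ki v c - v c) * star_denom c.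
Proof.
  pose proof (star_denom_gt0 c).
  change (star_first eta kr rb rd ki v c) with (star_numer c / star_denom c).
  unfold star_residual; field; lra.
Qed.

Lemma star_residual_eq0 (c : nat) :
  star_residual c = 0 <-> star_first eta kr rb rd ki v c = v c.
Proof.
  pose proof (star_denom_gt0 c); rewrite star_residual_eq.
  split; intros H0; [|rewrite H0; ring].
  apply Rmult_integral in H0; lra.
Qed.

Lemma star_residual_ge0 (c : nat) :
  v c <= star_first eta kr rb rd ki v c -> 0 <= star_residual c.
Proof.
  pose proof (star_denom_gt0 c); rewrite star_residual_eq; nra.
Qed.

End ProductSolution.

Lemma Rmin_eq_cases {x a b : R} :
  x = Rmin a b -> x <= a /\ x <= b /\ (x = a \/ x = b).
Proof. unfold Rmin; destruct (Rle_dec a b); lra. Qed.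

Lemma Rmin_eq0 (a b : R) : 0 <= a -> 0 <= b -> a = 0 \/ b = 0 -> Rmin a b = 0.
Proof. unfold Rmin; destruct (Rle_dec a b); lra. Qed.

Lemma bounded_nonneg_ge0 (f : nat -> R) : bounded_nonneg f -> forall c, 0 <= f c.
Proof. intros [M HM] c; apply HM. Qed.

Lemma Vfun_bounded (eta kr : R) (v : nat -> R) (Smax Imax : nat) :
  0 < eta + kr -> bounded_fun v ->
  exists M : R, forall s c i : nat, (s <= Smax)%nat -> (i <= Imax)%nat ->
    Rabs (Vfun eta kr v s c i) <= M.
Proof.
  intros Hek [Mv HMv].
  exists (INR Smax * Mv + INR Imax / (eta + kr)); intros s c i Hs Hi.
  assert (Hsle : INR s <= INR Smax) by (apply le_INR; exact Hs).
  assert (Hile : INR i <= INR Imax) by (apply le_INR; exact Hi).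
  pose proof (pos_INR s); pose proof (pos_INR i); pose proof (HMv c).
  pose proof (Rabs_pos (v c)).
  assert (Hi_div : 0 <= INR i / (eta + kr) <= INR Imax / (eta + kr)).
  { split; [apply Rmult_le_pos; [|left; apply Rinv_0_lt_compat]|apply Rmult_le_compat_r;
      [left; apply Rinv_0_lt_compat|]]; lra. }
  unfold Vfun; eapply Rle_trans; [apply Rabs_triang|].
  rewrite Rabs_mult, (Rabs_pos_eq (INR s)), (Rabs_pos_eq (_ / _)) by lra.
  apply Rplus_le_compat; [apply Rmult_le_compat|]; lra.
Qed.

Theorem lemma5p1 (S I : nat) (eta kr lam : R) (rb rd ki v : nat -> R)
  (Heta : 0 < eta) (Hkr : 0 < kr) (Hlam : 0 < lam)
  (Hrb : bounded_nonneg rb) (Hrd : bounded_nonneg rd) (Hki : bounded_nonneg ki)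
  (Hrb0 : rb 0%nat = 0) (Hrd0 : rd 0%nat = 0) (Hki0 : ki 0%nat = 0)
  (Hv : bounded_fun v)
  (Hstar : forall c : nat, v c = Rmin (star_first eta kr rb rd ki v c) lam) :
  (* V is bounded on X = {0..S} x N x {0..S+I} *)
  (exists M : R, forall s c i : nat, (s <= S)%nat -> (i <= S + I)%nat ->
      Rabs (Vfun eta kr v s c i) <= M)
  /\
  (* (HJB) for s >= 1 *)
  (forall s c i : nat, (1 <= s <= S)%nat -> (i <= S + I)%nat ->
      Rmin (hjb_first eta kr rb rd ki (Vfun eta kr v) s c i)
           (hjb_second lam (Vfun eta kr v) s c i) = 0)
  /\
  (* (HJB) for s = 0 *)
  (forall c i : nat, (i <= S + I)%nat ->
      hjb_zero eta kr rb rd (Vfun eta kr v) c i = 0)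
  /\
  (* correspondence of the active branches *)
  (forall s c i : nat, (1 <= s <= S)%nat -> (i <= S + I)%nat ->
      (star_first eta kr rb rd ki v c = v c <->
         hjb_first eta kr rb rd ki (Vfun eta kr v) s c i = 0)
      /\
      (lam = v c <-> hjb_second lam (Vfun eta kr v) s c i = 0)).
Proof.
  pose proof (bounded_nonneg_ge0 _ Hrb) as Hrb'.
  pose proof (bounded_nonneg_ge0 _ Hrd) as Hrd'.
  pose proof (bounded_nonneg_ge0 _ Hki) as Hki'.
  assert (Hek : eta + kr <> 0) by lra.
  pose proof (star_residual_eq0 eta kr rb rd ki v Heta Hrb' Hrd' Hki') as Hres0.
  split; [|split; [|split]].
  - apply Vfun_bounded; [lra | exact Hv].
  - intros s c i Hs _.
    rewrite hjb_first_Vfun, hjb_second_Vfun by (assumption || lia).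
    destruct (Rmin_eq_cases (Hstar c)) as [Hfirst [Hsecond Hactive]].
    apply Rmin_eq0.
    + apply Rmult_le_pos; [apply pos_INR|].
      exact (star_residual_ge0 eta kr rb rd ki v Heta Hrb' Hrd' Hki' c Hfirst).
    + lra.
    + destruct Hactive as [Hv_first | Hv_lam]; [left | right; lra].
      rewrite (proj2 (Hres0 c) (eq_sym Hv_first)); ring.
  - intros c i _; exact (hjb_zero_Vfun eta kr rb rd v Hek c i).
  - intros s c i Hs _.
    rewrite hjb_first_Vfun, hjb_second_Vfun, <- Hres0 by (assumption || lia).
    assert (Hs_pos : 0 < INR s) by (apply lt_0_INR; lia).
    split; split; intros Heq; try lra.
    + rewrite Heq; ring.
    + apply Rmult_integral in Heq; lra.
Qed.
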